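(* Fix an integer $N\ge 1$. For real $\mu$, let $\ell^2_\mu\subset\mathbb{C}^\infty$ be the space of sequences with norm $\|\mathbf u\|_{\ell^2_\mu}=\bigl(\sum_{k\ge0}|u_k|^2(k+1)^{2\mu}\bigr)^{1/2}$, and equip $\mathbb{C}^n$ (viewed as the first $n$ entries of a sequence) with the induced norm, also denoted $\ell^2_\mu$. Let $\mathcal L$, $\mathcal B$, $D$ and $\mathcal R$ be as in the context (in particular $\mathcal B:\ell^2_D\to\mathbb{C}^N$ is bounded). Suppose that $\begin{pmatrix}\mathcal B\\ \mathcal L\end{pmatrix}:\ell^2_{\lambda+1}\to\ell^2_\lambda$ is an invertible operator for some $\lambda\in\{D-1,D,D+1,\dots\}$. Let $\mathcal P_n=(I_n,\mathbf 0)$ be the $n\times\infty$ projection onto the first $n$ entries, $R_n=\mathcal P_n\mathcal R\mathcal P_n^\top$ and $A_n=\mathcal P_n\begin{pmatrix}\mathcal B\\ \mathcal L\end{pmatrix}\mathcal P_n^\top$. Then, as $n\to\infty$, $$\|A_nR_n\|_{\ell^2_\lambda}=O(1)\quad\text{and}\quad\|(A_nR_n)^{-1}\|_{\ell^2_\lambda}=O(1).$$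
   Context: Chebyshev polynomials are $T_k(x)=\cos(k\arccos x)$. For integers $\lambda\ge1$, $C^{(\lambda)}_k$ are the ultraspherical polynomials, orthogonal on $[-1,1]$ with weight $(1-x^2)^{\lambda-1/2}$ and normalized so that $C^{(\lambda)}_k(x)=\frac{2^k(\lambda)_k}{k!}x^k+O(x^{k-1})$, $(\lambda)_k=\frac{(\lambda+k-1)!}{(\lambda-1)!}$. Operators act on coefficient sequences indexed from $0$. $(\mathcal D_\lambda\mathbf u)_j=2^{\lambda-1}(\lambda-1)!\,(j+\lambda)u_{j+\lambda}$ (maps Chebyshev coefficients of $u$ to $C^{(\lambda)}$ coefficients of $u^{(\lambda)}$). $(\mathcal S_0\mathbf u)_0=u_0-\tfrac12u_2$, $(\mathcal S_0\mathbf u)_j=\tfrac12(u_j-u_{j+2})$ for $j\ge1$ (Chebyshev to $C^{(1)}$ coefficients); for $\lambda\ge1$, $(\mathcal S_\lambda\mathbf v)_j=\frac{\lambda}{\lambda+j}v_j-\frac{\lambda}{\lambda+j+2}v_{j+2}$ ($C^{(\lambda)}$ to $C^{(\lambda+1)}$ coefficients). $\mathcal M_0[a]$ maps Chebyshev coefficients of $v$ to Chebyshev coefficients of $av$, and for $\lambda\ge1$, $\mathcal M_\lambda[a]$ maps $C^{(\lambda)}$ coefficients of $v$ to $C^{(\lambda)}$ coefficients of $av$. The differential operator (with leading coefficient $1$) is represented on Chebyshev coefficients by $\mathcal L=\mathcal D_N+\sum_{\lambda=1}^{N-1}\mathcal S_{N-1}\cdots\mathcal S_\lambda\mathcal M_\lambda[a^\lambda]\mathcal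 D_\lambda+\mathcal S_{N-1}\cdots\mathcal S_0\mathcal M_0[a^0]$, where the coefficient functions $a^0,\dots,a^{N-1}$ are sufficiently smooth that each $\mathcal M_\lambda[a^\lambda]$ is bounded on every $\ell^2_\mu$. $\mathcal B$ is a linear operator from sequences to $\mathbb{C}^N$ representing exactly $N$ boundary conditions on the Chebyshev coefficients, and $D$ is an integer such that $\mathcal B:\ell^2_D\to\mathbb{C}^N$ is bounded. $\mathcal R=\frac{1}{2^{N-1}(N-1)!}\mathrm{diag}(1,\dots,1,\tfrac1N,\tfrac1{N+1},\dots)$ with $N$ leading ones. $\begin{pmatrix}\mathcal B\\ \mathcal L\end{pmatrix}$ outputs the $N$ entries of $\mathcal B\mathbf u$ followed by $\mathcal L\mathbf u$. *)

From HB Require Import structures.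
From mathcomp Require Import all_boot all_order all_algebra.
From mathcomp Require Import all_classical all_reals all_analysis.
From mathcomp Require Import complex.
Set Implicit Arguments. Unset Strict Implicit. Unset Printing Implicit Defensive.
Import Order.TTheory GRing.Theory Num.Theory.
Import numFieldNormedType.Exports.
Local Open Scope classical_set_scope.
Local Open Scope ring_scope.
Local Open Scope complex_scope.

Section Defs.
Variable R : realType.

Definition cre (z : R[i]) : R := let: Complex a _ := z in a.
Definition cim (z : R[i]) : R := let: Complex _ b := z in b.

Definition cabs2 (z : R[i]) : R := cre z ^+ 2 + cim z ^+ 2.

Definition wgt (mu : R) (k : nat) : R := powR (k.+1)%:R (2 * mu).

Definition in_l2 (mu : R) (u : nat -> R[i]) : Prop :=
  cvgn (series (fun k => cabs2 (u k) * wgt mu k)).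

Definition l2norm (mu : R) (u : nat -> R[i]) : R :=
  Num.sqrt (limn (series (fun k => cabs2 (u k) * wgt mu k))).

Definition vnorm (mu : R) (n : nat) (x : 'cV[R[i]]_n) : R :=
  Num.sqrt (\sum_(k < n) cabs2 (x k 0) * wgt mu k).

Definition cnorm (n : nat) (x : 'cV[R[i]]_n) : R :=
  Num.sqrt (\sum_(k < n) cabs2 (x k 0)).

Definition csum_cvg (f : nat -> R[i]) : Prop :=
  cvgn (series (fun k => cre (f k))) /\ cvgn (series (fun k => cim (f k))).
Definition csum (f : nat -> R[i]) : R[i] :=
  Complex (limn (series (fun k => cre (f k)))) (limn (series (fun k => cim (f k)))).

Definition cint (f : R -> R[i]) : R[i] :=
  Complex (Rintegral (@lebesgue_measure R) `[-1, 1] (fun x => cre (f x)))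
          (Rintegral (@lebesgue_measure R) `[-1, 1] (fun x => cim (f x))).

(* ultraspherical polynomials C^(l)_k(x), through the three-term recurrence
   (k+1) C_{k+1} = 2 (k+l) x C_k - (k+2l-1) C_{k-1}, C_0 = 1, C_1 = 2 l x.
   gegen2 l k x = (C^(l)_k(x), C^(l)_{k+1}(x)). *)
Fixpoint gegen2 (l : nat) (k : nat) (x : R) : R * R :=
  match k with
  | 0 => (1, 2 * l%:R * x)
  | k'.+1 => let: (a, b) := gegen2 l k' x in
             (b, (2 * (k'.+1 + l)%:R * x * b - (k' + 2 * l)%:R * a) / (k'.+2)%:R)
  end.
Definition gegen (l k : nat) (x : R) : R := (gegen2 l k x).1.

(* basis 0 = Chebyshev T_k(x) = cos(k arccos x); basis l = C^(l), l >= 1 *)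
Definition basis (l k : nat) (x : R) : R :=
  if l == 0 then cos (k%:R * acos x) else gegen l k x.

Definition oweight (l : nat) (x : R) : R := powR (1 - x ^+ 2) (l%:R - 2^-1).

(* entry (j,k) of M_l[a]: the j-th C^(l) coefficient of a * C^(l)_k *)
Definition Mentry (l : nat) (a : R -> R[i]) (j k : nat) : R[i] :=
  cint (fun x => a x * (basis l k x * basis l j x * oweight l x)%:C)
  / cint (fun x => (basis l j x ^+ 2 * oweight l x)%:C).

Definition Mop (l : nat) (a : R -> R[i]) (v : nat -> R[i]) : nat -> R[i] :=
  fun j => csum (fun k => Mentry l a j k * v k).

Definition Dop (l : nat) (u : nat -> R[i]) : nat -> R[i] :=
  fun j => ((2 ^+ l.-1 * (l.-1)`!%:R * (j + l)%:R : R)%:C) * u (j + l)%N.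

Definition S0 (u : nat -> R[i]) : nat -> R[i] :=
  fun j => if j == 0%N then u 0%N - (2^-1 : R)%:C * u 2%N
           else (2^-1 : R)%:C * (u j - u j.+2).
Definition Sl (l : nat) (v : nat -> R[i]) : nat -> R[i] :=
  fun j => ((l%:R / (l + j)%:R : R)%:C) * v j
           - ((l%:R / (l + j + 2)%:R : R)%:C) * v j.+2.
Definition Sop (l : nat) := if l == 0%N then S0 else Sl l.

(* schain m l = S_{l+m-1} o ... o S_{l+1} o S_l *)
Fixpoint schain (m l : nat) (v : nat -> R[i]) : nat -> R[i] :=
  match m with
  | 0 => v
  | m'.+1 => schain m' l.+1 (Sop l v)
  end.

(* the operator L (leading coefficient 1), coefficients a l, l < N *)
Definition Lop (N : nat) (a : nat -> R -> R[i]) (u : nat -> R[i]) : nat -> R[i] :=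
  fun j => Dop N u j
    + \sum_(1 <= l < N) schain (N - l) l (Mop l (a l) (Dop l u)) j
    + schain N 0 (Mop 0 (a 0%N) u) j.

Definition BLop (N : nat) (B : (nat -> R[i]) -> 'cV[R[i]]_N)
    (a : nat -> R -> R[i]) (u : nat -> R[i]) : nat -> R[i] :=
  fun j => if insub j is Some i then B u i 0 else Lop N a u (j - N)%N.

Definition eseq (j : nat) : nat -> R[i] := fun k => (k == j)%:R.

Definition Amat (N : nat) (B : (nat -> R[i]) -> 'cV[R[i]]_N)
    (a : nat -> R -> R[i]) (n : nat) : 'M[R[i]]_n :=
  \matrix_(i < n, j < n) BLop B a (eseq j) i.

Definition rdiag (N k : nat) : R :=
  (2 ^+ N.-1 * (N.-1)`!%:R)^-1 * (if (k < N)%N then 1 else (k%:R)^-1).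
Definition Rmat (N n : nat) : 'M[R[i]]_n :=
  \matrix_(i < n, j < n) (if i == j then (rdiag N i)%:C else 0).

End Defs.

(* For x in C^n put u = P_n^T R_n x.  The first n entries of (B;L) u form
   A_n R_n x, and since the diagonal of R is a constant multiple of (k+1)^-1 up to a
   factor in [1, 2N], the l^2_{lam+1} norm of u is comparable to the l^2_lam norm of x.
   So the two-sided bound for (B;L) transfers to A_n R_n, up to the entries of (B;L) u
   beyond index n.  There D_N u vanishes and only the lower order part of L remains;
   that part is bounded on l^2_{lam+1} (each D_l costs one order of the weight and the
   conversion S_l in front of it gains one back), and reading its entries of index
   i - N >= n - N in l^2_lam instead of l^2_{lam+1} gains a factor (n - N + 1)^-2.
   For n large this tail is absorbed by the lower bound for (B;L). *)

From mathcomp Require Import all_boot all_order all_algebra.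
From mathcomp Require Import all_classical all_reals all_analysis.
From mathcomp Require Import complex.
From mathcomp Require Import ring lra zify.
Import Order.TTheory GRing.Theory Num.Theory.
Import numFieldNormedType.Exports.
Set Implicit Arguments. Unset Strict Implicit.
Local Open Scope ring_scope.

Section WeightedSequences.
Variable R : realType.
Local Open Scope complex_scope.
Implicit Types (u v : nat -> R[i]) (mu : R).

Lemma cabs2_ge0 (x : R[i]) : 0 <= cabs2 x.
Proof. by case: x => a b; rewrite /cabs2 /= addr_ge0 // sqr_ge0. Qed.

Lemma cabs2_0 : cabs2 (0 : R[i]) = 0.
Proof. by rewrite /cabs2 /= expr0n addr0. Qed.

Lemma cabs2M (x y : R[i]) : cabs2 (x * y) = cabs2 x * cabs2 y.
Proof. by case: x => a b; case: y => c d; rewrite /cabs2 /=; ring. Qed.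

Lemma cabs2C (r : R) : cabs2 r%:C = r ^+ 2.
Proof. by rewrite /cabs2 /=; ring. Qed.

Lemma cabs2_eq0 (x : R[i]) : cabs2 x = 0 -> x = 0.
Proof.
case: x => a b; rewrite /cabs2 /= => /eqP.
by rewrite paddr_eq0 ?sqr_ge0 // !sqrf_eq0 => /andP[/eqP-> /eqP->].
Qed.

Lemma cabs2D_le (x y : R[i]) : cabs2 (x + y) <= 2 * cabs2 x + 2 * cabs2 y.
Proof.
case: x => a b; case: y => c d; rewrite /cabs2 /= -subr_ge0.
have -> : 2 * (a ^+ 2 + b ^+ 2) + 2 * (c ^+ 2 + d ^+ 2) - ((a + c) ^+ 2 + (b + d) ^+ 2)
  = (a - c) ^+ 2 + (b - d) ^+ 2 by ring.
by rewrite addr_ge0 // sqr_ge0.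
Qed.

Lemma cabs2B_le (x y : R[i]) : cabs2 (x - y) <= 2 * cabs2 x + 2 * cabs2 y.
Proof.
case: x => a b; case: y => c d; rewrite /cabs2 /= -subr_ge0.
have -> : 2 * (a ^+ 2 + b ^+ 2) + 2 * (c ^+ 2 + d ^+ 2) - ((a - c) ^+ 2 + (b - d) ^+ 2)
  = (a + c) ^+ 2 + (b + d) ^+ 2 by ring.
by rewrite addr_ge0 // sqr_ge0.
Qed.

Lemma ler_sqr_ge0 (x y : R) : 0 <= x -> x <= y -> x ^+ 2 <= y ^+ 2.
Proof. by move=> x0 xy; rewrite !expr2 ler_pM. Qed.

Lemma powR_ge1 (x r : R) : 1 <= x -> 0 <= r -> 1 <= powR x r.
Proof.
move=> x1 r0; have := @ge0_ler_powR R r r0 1 x; rewrite powR1 => -> //.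
  by rewrite nnegrE ler01.
by rewrite nnegrE (le_trans ler01 x1).
Qed.

Lemma powR_le_comparable (x y c e : R) : 0 < x -> 0 < y ->
  x <= c * y -> y <= c * x -> powR x e <= powR c `|e| * powR y e.
Proof.
move=> x0 y0 xy yx.
have c0 : 0 < c by have := lt_le_trans x0 xy; rewrite pmulr_lgt0.
have -> : x = (x / y) * y by rewrite divfK // gt_eqF.
rewrite powRM ?(ltW y0) ?divr_ge0 ?(ltW x0) ?(ltW y0) //.
rewrite ler_wpM2r ?powR_ge0 //.
have xy0 : 0 < x / y by rewrite divr_gt0.
have [e0|e0] := leP 0 e.
  have xyc : x / y <= c by rewrite ler_pdivrMr // mulrC.
  by rewrite ger0_norm //; apply: ge0_ler_powR; rewrite ?nnegrE ?(ltW xy0) ?(ltW c0).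
rewrite ltr0_norm // -{1}(opprK e) powRN.
rewrite -(mul1r (_^-1)) ler_pdivrMr ?powR_gt0 // -powRM ?(ltW xy0) ?(ltW c0) //.
apply: powR_ge1; last by rewrite oppr_ge0 ltW.
by rewrite mulrA ler_pdivlMr // mul1r.
Qed.

Lemma wgt_gt0 mu k : 0 < wgt mu k.
Proof. by rewrite /wgt powR_gt0 // ltr0n. Qed.

Lemma wgtS mu k : wgt (mu + 1) k = k.+1%:R ^+ 2 * wgt mu k.
Proof.
rewrite /wgt mulrDr mulr1 addrC powRD; last by rewrite pnatr_eq0 implybT.
by rewrite powR_mulrn // ler0n.
Qed.

Lemma wgt_le_wgtS mu k : wgt mu k <= wgt (mu + 1) k.
Proof. by rewrite wgtS ler_peMl ?(ltW (wgt_gt0 _ _)) // expr_ge1 // ler1n. Qed.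

Lemma wgt_le_near mu j k s : (j <= k + s)%N -> (k <= j + s)%N ->
  wgt mu j <= powR s.+1%:R (2 * `|mu|) * wgt mu k.
Proof.
move=> jk kj; rewrite -[2]ger0_norm // -normrM /wgt.
by apply: powR_le_comparable; rewrite ?ltr0n // -natrM ler_nat; nia.
Qed.

Definition wterm mu u k : R := cabs2 (u k) * wgt mu k.
Definition wsum mu u : nat -> R := series (wterm mu u).
Definition l2bound mu u (Q : R) := forall n, wsum mu u n <= Q.

Lemma wsumE mu u n : wsum mu u n = \sum_(k < n) wterm mu u k.
Proof. by rewrite /wsum /series /= big_mkord. Qed.

Lemma wterm_ge0 mu u k : 0 <= wterm mu u k.
Proof. by rewrite mulr_ge0 ?cabs2_ge0 ?(ltW (wgt_gt0 _ _)). Qed.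

Lemma wsum_ge0 mu u n : 0 <= wsum mu u n.
Proof. by rewrite wsumE sumr_ge0 // => k _; exact: wterm_ge0. Qed.

Lemma wsum_nondecreasing mu u : {homo wsum mu u : n m / (n <= m)%N >-> n <= m}.
Proof. by apply: nondecreasing_series => k _ _; exact: wterm_ge0. Qed.

Lemma l2bound_le mu u Q Q' : Q <= Q' -> l2bound mu u Q -> l2bound mu u Q'.
Proof. by move=> QQ' hQ n; apply: le_trans (hQ n) QQ'. Qed.

Lemma l2bound_in_l2 mu u Q : l2bound mu u Q -> in_l2 mu u.
Proof.
move=> hQ; apply: (@nondecreasing_is_cvgn _ (wsum mu u)).
  exact: wsum_nondecreasing.
by exists Q => _ [n _ <-].
Qed.

Lemma l2norm_ge0 mu u : 0 <= l2norm mu u.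
Proof. exact: sqrtr_ge0. Qed.

Lemma l2norm_sqr mu u : in_l2 mu u -> l2norm mu u ^+ 2 = limn (wsum mu u).
Proof.
move=> hu; rewrite /l2norm sqr_sqrtr //.
by apply: le_trans (wsum_ge0 mu u 0) (nondecreasing_cvgn_le (wsum_nondecreasing _ _) hu _).
Qed.

Lemma l2bound_l2norm mu u : in_l2 mu u -> l2bound mu u (l2norm mu u ^+ 2).
Proof.
by move=> hu n; rewrite l2norm_sqr //; exact: nondecreasing_cvgn_le (wsum_nondecreasing _ _) hu n.
Qed.

Lemma l2norm_sqr_le mu u Q : l2bound mu u Q -> l2norm mu u ^+ 2 <= Q.
Proof.
move=> hQ; rewrite l2norm_sqr; last exact: l2bound_in_l2 hQ.
by apply: limr_le; [exact: l2bound_in_l2 hQ | apply: nearW].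
Qed.

Lemma sum_wterm_shift_le mu u s n :
  \sum_(0 <= j < n) wterm mu u (j + s) <= wsum mu u (n + s).
Proof.
rewrite /wsum /series /= (@big_cat_nat _ _ _ s 0 (n + s)) ?leq_addl //=.
rewrite -{3}[s]add0n big_addn addnK lerDr sumr_ge0 // => k _; exact: wterm_ge0.
Qed.

Lemma l2bound_add mu v w Q1 Q2 : l2bound mu v Q1 -> l2bound mu w Q2 ->
  l2bound mu (fun j => v j + w j) (2 * Q1 + 2 * Q2).
Proof.
move=> h1 h2 n; rewrite /wsum /series /=.
apply: le_trans (_ : \sum_(0 <= j < n) (2 * wterm mu v j + 2 * wterm mu w j) <= _).
  apply: ler_sum_nat => j _; rewrite /wterm !mulrA -mulrDl.
  by rewrite ler_wpM2r ?(ltW (wgt_gt0 _ _)) // cabs2D_le.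
by rewrite big_split /= -!mulr_sumr lerD // ler_wpM2l //; [exact: h1 | exact: h2].
Qed.

Lemma l2bound_wgtS mu v Q : l2bound (mu + 1) v Q -> l2bound mu v Q.
Proof.
move=> hQ n; apply: le_trans (hQ n); rewrite !wsumE; apply: ler_sum => k _.
by rewrite ler_wpM2l ?cabs2_ge0 // wgt_le_wgtS.
Qed.

Definition supported (M : nat) u := forall k, (M <= k)%N -> u k = 0.

Lemma wsum_supported mu u M n : supported M u -> (M <= n)%N -> wsum mu u n = wsum mu u M.
Proof.
move=> hu Mn; rewrite /wsum /series /= (@big_cat_nat _ _ _ M 0 n _ _ (leq0n M) Mn) /=.
suff -> : \sum_(M <= k < n) wterm mu u k = 0 by rewrite addr0.
rewrite big_nat_cond big1 // => k /andP[/andP[Mk _] _].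
by rewrite /wterm hu // cabs2_0 mul0r.
Qed.

Lemma l2bound_supported mu u M : supported M u -> l2bound mu u (wsum mu u M).
Proof.
move=> hu n; have [nM|Mn] := leqP n M; first exact: wsum_nondecreasing.
by rewrite (wsum_supported _ hu (ltnW Mn)).
Qed.

Lemma l2norm_supported mu u M : supported M u -> l2norm mu u ^+ 2 = wsum mu u M.
Proof.
move=> hu; apply/le_anti/andP; split; first exact/l2norm_sqr_le/l2bound_supported.
exact/l2bound_l2norm/l2bound_in_l2/(l2bound_supported mu hu).
Qed.

End WeightedSequences.

Section BoundedOperators.
Variable R : realType.
Local Open Scope complex_scope.
Implicit Types (u v : nat -> R[i]) (mu : R) (T S : (nat -> R[i]) -> nat -> R[i]).

(* Boundedness from [l2_mu] to [l2_mu'], phrased on bounds of the partial sums so that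
   it needs no convergence hypothesis on the image. *)
Definition bounded_op mu mu' T :=
  exists K, 0 <= K /\ forall v Q, l2bound mu v Q -> l2bound mu' (T v) (K * Q).

Lemma bounded_op0 mu mu' : bounded_op mu mu' (fun _ _ => 0).
Proof.
exists 0; split => // v Q _ n; rewrite mul0r wsumE big1 // => k _.
by rewrite /wterm cabs2_0 mul0r.
Qed.

Lemma bounded_op_comp mu1 mu2 mu3 T S :
  bounded_op mu2 mu3 T -> bounded_op mu1 mu2 S -> bounded_op mu1 mu3 (fun v => T (S v)).
Proof.
move=> [K [K0 hT]] [K' [K'0 hS]]; exists (K * K'); split; first exact: mulr_ge0.
by move=> v Q /hS /hT; rewrite mulrA.
Qed.

Lemma bounded_op_wgtS mu T : bounded_op mu (mu + 1) T -> bounded_op mu mu T.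
Proof. by move=> [K [K0 hT]]; exists K; split => // v Q /hT /l2bound_wgtS. Qed.

Lemma bounded_op_add mu mu' T S : bounded_op mu mu' T -> bounded_op mu mu' S ->
  bounded_op mu mu' (fun v j => T v j + S v j).
Proof.
move=> [K [K0 hT]] [K' [K'0 hS]]; exists (2 * K + 2 * K'); split.
  by rewrite addr_ge0 ?mulr_ge0.
move=> v Q hv; rewrite mulrDl -!mulrA; exact: l2bound_add (hT _ _ hv) (hS _ _ hv).
Qed.

Lemma bounded_op_sum mu mu' m n (T : nat -> (nat -> R[i]) -> nat -> R[i]) :
  (forall l, (m <= l < n)%N -> bounded_op mu mu' (T l)) ->
  bounded_op mu mu' (fun v j => \sum_(m <= l < n) T l v j).
Proof.
have empty k : (k <= m)%N -> (fun v j => \sum_(m <= l < k) T l v j) = fun _ _ => 0.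
  by move=> km; apply: funext => v; apply: funext => j; rewrite big_geq.
elim: n => [|n IH] hT; first by rewrite empty //; exact: bounded_op0.
have [mn|nm] := leqP m n; last by rewrite empty //; exact: bounded_op0.
have -> : (fun v j => \sum_(m <= l < n.+1) T l v j) =
          fun v j => \sum_(m <= l < n) T l v j + T n v j.
  by apply: funext => v; apply: funext => j; rewrite big_nat_recr.
apply: bounded_op_add; last by apply: hT; rewrite mn ltnSn.
by apply: IH => l /andP[ml ln]; apply: hT; rewrite ml ltnW.
Qed.

Lemma bounded_op_of_terms mu mu' T K1 K2 s1 s2 : 0 <= K1 -> 0 <= K2 ->
  (forall v j, wterm mu' (T v) j <= K1 * wterm mu v (j + s1) + K2 * wterm mu v (j + s2)) ->
  bounded_op mu mu' T.
Proof.
move=> K10 K20 hT; exists (K1 + K2); split; first exact: addr_ge0.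
move=> v Q hv n; rewrite /wsum /series /=.
apply: le_trans (_ : _ <= \sum_(0 <= j < n) (K1 * wterm mu v (j + s1) + K2 * wterm mu v (j + s2))) _.
  by apply: ler_sum_nat => j _; exact: hT.
rewrite big_split /= -!mulr_sumr mulrDl.
by rewrite lerD // ler_wpM2l //; apply: le_trans (sum_wterm_shift_le _ _ _ _) (hv _).
Qed.

Lemma bounded_op_of_l2norm mu T c :
  (forall v, in_l2 mu v -> in_l2 mu (T v) /\ l2norm mu (T v) <= c * l2norm mu v) ->
  bounded_op mu mu T.
Proof.
move=> hT; exists (c ^+ 2); split; first exact: sqr_ge0.
move=> v Q hv; have [Tv_l2 Tv_le] := hT v (l2bound_in_l2 hv).
apply: l2bound_le (l2bound_l2norm Tv_l2).
apply: le_trans (ler_sqr_ge0 (l2norm_ge0 _ _) Tv_le) _.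
by rewrite exprMn ler_wpM2l ?sqr_ge0 // l2norm_sqr_le.
Qed.

Lemma Dop_bounded l mu : bounded_op (mu + 1) mu (Dop l).
Proof.
pose C0 : R := 2 ^+ l.-1 * (l.-1)`!%:R.
pose P := powR l.+1%:R (2 * `|mu|).
apply: (@bounded_op_of_terms _ _ _ (C0 ^+ 2 * P) 0 l l) => //.
  by rewrite mulr_ge0 ?sqr_ge0 ?powR_ge0.
move=> v j; rewrite mul0r addr0 /wterm /Dop cabs2M cabs2C wgtS -/C0.
set X := cabs2 _; have X0 : 0 <= X by exact: cabs2_ge0.
have hw : wgt mu j <= P * wgt mu (j + l) by apply: wgt_le_near; lia.
have -> : (C0 * (j + l)%:R) ^+ 2 * X * wgt mu j =
          (C0 ^+ 2 * (j + l)%:R ^+ 2 * X) * wgt mu j by ring.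
have -> : C0 ^+ 2 * P * (X * ((j + l).+1%:R ^+ 2 * wgt mu (j + l))) =
          (C0 ^+ 2 * (j + l).+1%:R ^+ 2 * X) * (P * wgt mu (j + l)) by ring.
apply: ler_pM => //; rewrite ?mulr_ge0 ?sqr_ge0 ?(ltW (wgt_gt0 _ _)) //.
by rewrite ler_wpM2r // ler_wpM2l ?sqr_ge0 // ler_sqr_ge0 ?ler0n // ler_nat.
Qed.

Lemma Sl_coef_le (l j d : nat) : (0 < l)%N ->
  ((l%:R / (l + j + d)%:R : R) * j.+1%:R) ^+ 2 <= l%:R ^+ 2.
Proof.
move=> l0; apply: ler_sqr_ge0; first by rewrite mulr_ge0 ?divr_ge0 ?ler0n.
rewrite mulrAC ler_pdivrMr ?ltr0n; last by rewrite !addn_gt0 l0.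
by rewrite -!natrM ler_nat; nia.
Qed.

Lemma Sl_bounded l mu : (0 < l)%N -> bounded_op mu (mu + 1) (Sl l).
Proof.
move=> l0; pose P := powR 3%:R (2 * `|mu|).
have P0 : 0 <= P by exact: powR_ge0.
apply: (@bounded_op_of_terms _ _ _ (2 * l%:R ^+ 2) (2 * l%:R ^+ 2 * P) 0 2);
  rewrite ?mulr_ge0 ?sqr_ge0 // => v j.
rewrite /wterm /Sl wgtS addn0.
set a1 := (l%:R / (l + j)%:R : R); set b1 := (l%:R / (l + j + 2)%:R : R).
rewrite !addn2.
have X0 := cabs2_ge0 (v j); have X2 := cabs2_ge0 (v j.+2).
have w0 := wgt_gt0 mu j; have w2 := wgt_gt0 mu j.+2.
have hw : wgt mu j <= P * wgt mu j.+2 by apply: wgt_le_near; lia.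
have ha : (a1 * j.+1%:R) ^+ 2 <= l%:R ^+ 2 by rewrite /a1 -[(l + j)%N]addn0 Sl_coef_le.
have hb : (b1 * j.+1%:R) ^+ 2 <= l%:R ^+ 2 by rewrite /b1 Sl_coef_le.
have hS := cabs2B_le (a1%:C * v j) (b1%:C * v j.+2); rewrite !cabs2M !cabs2C in hS.
have w1 : 0 <= j.+1%:R ^+ 2 * wgt mu j by rewrite mulr_ge0 ?sqr_ge0 ?ltW.
apply: le_trans (ler_wpM2r w1 hS) _.
have -> : (2 * (a1 ^+ 2 * cabs2 (v j)) + 2 * (b1 ^+ 2 * cabs2 (v j.+2))) *
    (j.+1%:R ^+ 2 * wgt mu j) =
  2 * (a1 * j.+1%:R) ^+ 2 * (cabs2 (v j) * wgt mu j) +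
  2 * (b1 * j.+1%:R) ^+ 2 * (cabs2 (v j.+2) * wgt mu j) by ring.
have -> : 2 * l%:R ^+ 2 * P * (cabs2 (v j.+2) * wgt mu j.+2) =
  2 * l%:R ^+ 2 * (cabs2 (v j.+2) * (P * wgt mu j.+2)) by ring.
apply: lerD; first by rewrite ler_wpM2r ?ler_wpM2l // mulr_ge0 // ltW.
apply: ler_pM; rewrite ?mulr_ge0 ?sqr_ge0 //; last exact: ler_wpM2l.
  exact: ltW.
exact: ler_wpM2l.
Qed.

Lemma S0_bounded mu : bounded_op mu mu (@S0 R).
Proof.
pose P := powR 3%:R (2 * `|mu|).
have P0 : 0 <= P by exact: powR_ge0.
apply: (@bounded_op_of_terms _ _ _ 2 (2 * P) 0 2); rewrite ?mulr_ge0 // => v j.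
rewrite /wterm addn0 addn2.
have X2 := cabs2_ge0 (v j.+2); have w0 := wgt_gt0 mu j.
have hw : wgt mu j <= P * wgt mu j.+2 by apply: wgt_le_near; lia.
have hS : cabs2 (S0 v j) <= 2 * cabs2 (v j) + 2 * cabs2 (v j.+2).
  have h4 : (2^-1 : R) ^+ 2 <= 1.
    by rewrite expr_le1 // ?invr_ge0 ?ler0n // invf_le1 ?ler1n // ltr0n.
  rewrite /S0; case: eqP => [->|_].
    apply: le_trans (cabs2B_le _ _) _; rewrite lerD2l cabs2M cabs2C ler_wpM2l //.
    by rewrite -[X in _ <= X]mul1r ler_wpM2r ?cabs2_ge0.
  rewrite cabs2M cabs2C; apply: le_trans (ler_wpM2l (sqr_ge0 _) (cabs2B_le _ _)) _.
  by rewrite -[X in _ <= X]mul1r ler_wpM2r // addr_ge0 // mulr_ge0 ?cabs2_ge0.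
apply: le_trans (ler_wpM2r (ltW w0) hS) _.
rewrite mulrDl -!mulrA lerD2l ler_wpM2l // mulrCA ler_wpM2l //.
Qed.

Lemma Sop_pos l : (0 < l)%N -> Sop l = @Sl R l.
Proof. by case: l. Qed.

Lemma schainS k l : schain k.+1 l = fun v => schain k l.+1 (@Sop R l v).
Proof. by []. Qed.

Lemma schain_bounded k l mu : (0 < l)%N -> bounded_op mu mu (schain k l).
Proof.
elim: k l => [|k IH] l l0; first by exists 1; split => // v Q; rewrite mul1r.
rewrite schainS Sop_pos //.
exact: bounded_op_comp (IH l.+1 isT) (bounded_op_wgtS (Sl_bounded _ l0)).
Qed.

Lemma schain_smoothing k l mu : (0 < l)%N -> bounded_op mu (mu + 1) (schain k.+1 l).
Proof.
move=> l0; rewrite schainS Sop_pos //.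
exact: bounded_op_comp (@schain_bounded k l.+1 _ isT) (Sl_bounded _ l0).
Qed.

Lemma schain0_bounded k mu : bounded_op mu mu (schain k.+1 0).
Proof.
by rewrite schainS; exact: bounded_op_comp (@schain_bounded k 1 _ isT) (S0_bounded _).
Qed.

Definition Llow N a u : nat -> R[i] := fun j =>
  \sum_(1 <= l < N) schain (N - l) l (Mop l (a l) (Dop l u)) j
  + schain N 0 (Mop 0 (a 0%N) u) j.

Lemma LopE N a u j : Lop N a u j = Dop N u j + Llow N a u j.
Proof. by rewrite /Lop /Llow addrA. Qed.

Lemma Llow_bounded N a mu : (0 < N)%N ->
  (forall l, (l < N)%N -> forall mu, exists c, forall v, in_l2 mu v ->
     in_l2 mu (Mop l (a l) v) /\ l2norm mu (Mop l (a l) v) <= c * l2norm mu v) ->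
  bounded_op (mu + 1) (mu + 1) (Llow N a).
Proof.
move=> N0 HM.
have Mop_bounded l mu' : (l < N)%N -> bounded_op mu' mu' (Mop l (a l)).
  by move=> lN; have [c hc] := HM l lN mu'; exact: bounded_op_of_l2norm hc.
apply: bounded_op_add.
  apply: bounded_op_sum => l /andP[l0 lN]; rewrite -(subnSK lN).
  apply: bounded_op_comp (schain_smoothing _ _ l0) _.
  exact: bounded_op_comp (Mop_bounded _ _ lN) (Dop_bounded _ _).
rewrite -(prednK N0).
exact: bounded_op_comp (schain0_bounded _ _) (Mop_bounded _ _ _).
Qed.

End BoundedOperators.

Section Linearity.
Variable R : realType.
Local Open Scope complex_scope.
Implicit Types (u v : nat -> R[i]).

Definition lincomb n (c : 'I_n -> R[i]) (w : 'I_n -> nat -> R[i]) : nat -> R[i] :=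
  fun k => \sum_j c j * w j k.

Definition linear_seqop (T : (nat -> R[i]) -> nat -> R[i]) :=
  forall n (c : 'I_n -> R[i]) (w : 'I_n -> nat -> R[i]),
    T (lincomb c w) = lincomb c (fun j => T (w j)).

Lemma Dop_linear l : linear_seqop (Dop l).
Proof.
move=> n c w; apply: funext => k; rewrite /Dop /lincomb mulr_sumr.
by apply: eq_bigr => j _; rewrite mulrCA.
Qed.

Lemma S0_linear : linear_seqop (@S0 R).
Proof.
move=> n c w; apply: funext => k; rewrite /S0 /lincomb; case: eqP => _.
  by rewrite mulr_sumr -sumrB; apply: eq_bigr => j _; ring.
by rewrite -sumrB mulr_sumr; apply: eq_bigr => j _; ring.
Qed.

Lemma Sl_linear l : linear_seqop (@Sl R l).
Proof.
move=> n c w; apply: funext => k; rewrite /Sl /lincomb !mulr_sumr -sumrB.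
by apply: eq_bigr => j _; ring.
Qed.

Lemma Sop_linear l : linear_seqop (@Sop R l).
Proof. by rewrite /Sop; case: eqP => _; [exact: S0_linear | exact: Sl_linear]. Qed.

Lemma schain_linear m l : linear_seqop (@schain R m l).
Proof. by elim: m l => [|m IH] l n c v //=; rewrite Sop_linear IH. Qed.

Lemma supported_lincomb M n (c : 'I_n -> R[i]) (w : 'I_n -> nat -> R[i]) :
  (forall j, supported M (w j)) -> supported M (lincomb c w).
Proof. by move=> hw k Mk; rewrite /lincomb big1 // => j _; rewrite hw // mulr0. Qed.

Lemma supported_Dop M l u : supported M u -> supported M (Dop l u).
Proof. by move=> hu k Mk; rewrite /Dop hu ?mulr0 // (leq_trans Mk) // leq_addr. Qed.

Lemma limn_series_eventually0 (g : nat -> R) M : (forall k, (M <= k)%N -> g k = 0) ->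
  limn (series g) = \sum_(0 <= k < M) g k.
Proof.
move=> hg; apply: lim_near_cst => //; exists M => // n /= Mn.
rewrite /series /= (@big_cat_nat _ _ _ M) //=.
suff -> : \sum_(M <= k < n) g k = 0 by rewrite addr0.
by rewrite big_nat_cond big1 // => k /andP[/andP[Mk _] _]; exact: hg.
Qed.

Lemma cre_sum (I : Type) (r : seq I) (P : pred I) (F : I -> R[i]) :
  cre (\sum_(i <- r | P i) F i) = \sum_(i <- r | P i) cre (F i).
Proof. by apply: (big_morph (@cre R)) => // [[x1 x2] [y1 y2]]. Qed.

Lemma cim_sum (I : Type) (r : seq I) (P : pred I) (F : I -> R[i]) :
  cim (\sum_(i <- r | P i) F i) = \sum_(i <- r | P i) cim (F i).
Proof. by apply: (big_morph (@cim R)) => // [[x1 x2] [y1 y2]]. Qed.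

Lemma csum_supported (f : nat -> R[i]) M : supported M f -> csum f = \sum_(0 <= k < M) f k.
Proof.
move=> hf; rewrite /csum !(@limn_series_eventually0 _ M) => [| k Mk | k Mk]; last 2 first.
- by rewrite hf.
- by rewrite hf.
by rewrite -cre_sum -cim_sum; case: (\sum_(0 <= k < M) f k).
Qed.

(* [M_l] is only known to be linear on finitely supported sequences, where its
   defining series are finite sums. *)
Lemma Mop_lincomb l (f : R -> R[i]) M n (c : 'I_n -> R[i]) (w : 'I_n -> nat -> R[i]) :
  (forall j, supported M (w j)) ->
  Mop l f (lincomb c w) = lincomb c (fun j => Mop l f (w j)).
Proof.
move=> hw; apply: funext => i; rewrite /Mop (@csum_supported _ M); last first.
  by move=> k Mk; rewrite (supported_lincomb c hw) // mulr0.
rewrite /lincomb.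
have hwj j : csum (fun k => Mentry l f i k * w j k) = \sum_(0 <= k < M) Mentry l f i k * w j k.
  by apply: csum_supported => k Mk; rewrite hw // mulr0.
under [X in _ = X]eq_bigr => j _ do rewrite hwj.
under eq_bigr => k _ do rewrite mulr_sumr.
rewrite exchange_big /=; apply: eq_bigr => j _; rewrite mulr_sumr.
by apply: eq_bigr => k _; rewrite mulrCA.
Qed.

Lemma Lop_lincomb N a M n (c : 'I_n -> R[i]) (w : 'I_n -> nat -> R[i]) :
  (forall j, supported M (w j)) ->
  Lop N a (lincomb c w) = lincomb c (fun j => Lop N a (w j)).
Proof.
move=> hw; have hDw l j : supported M (Dop l (w j)) by exact: supported_Dop.
apply: funext => k; rewrite /Lop /lincomb.
under eq_bigr => l _ do rewrite Dop_linear (Mop_lincomb _ _ _ (hDw l)) schain_linear.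
rewrite Dop_linear (Mop_lincomb _ _ _ hw) schain_linear /lincomb.
rewrite exchange_big -!big_split /=; apply: eq_bigr => j _.
by rewrite !mulrDr mulr_sumr.
Qed.

Lemma B_lincomb N (B : (nat -> R[i]) -> 'cV[R[i]]_N) (D : R) M n (c : 'I_n -> R[i])
    (w : 'I_n -> nat -> R[i]) :
  (forall u v (c : R[i]), in_l2 D u -> in_l2 D v ->
     B (fun k => u k + c * v k) = B u + c *: B v) ->
  (forall j, supported M (w j)) ->
  B (lincomb c w) = \sum_j c j *: B (w j).
Proof.
move=> HB; have l2_supp M' u : supported M' u -> in_l2 D u.
  by move=> hu; exact: l2bound_in_l2 (l2bound_supported D hu).
have B0 : B (fun _ => 0) = 0.
  have h0 : supported 0 (fun _ => 0 : R[i]) by [].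
  have := HB _ _ 1 (l2_supp _ _ h0) (l2_supp _ _ h0).
  have -> : (fun k : nat => 0 + 1 * 0 : R[i]) = fun _ => 0.
    by apply: funext => k; rewrite mulr0 addr0.
  by rewrite scale1r => h; apply: (@addrI _ (B (fun _ => 0))); rewrite addr0 -h.
elim: n c w => [|n IH] c w hw.
  have -> : lincomb c w = fun _ => 0 by apply: funext => k; rewrite /lincomb big_ord0.
  by rewrite B0 big_ord0.
pose c' j := c (widen_ord (leqnSn n) j); pose w' j := w (widen_ord (leqnSn n) j).
have hw' j : supported M (w' j) by exact: hw.
have -> : lincomb c w = fun k => lincomb c' w' k + c ord_max * w ord_max k.
  by apply: funext => k; rewrite /lincomb big_ord_recr.
rewrite HB ?big_ord_recr ?IH //; last exact: l2_supp (hw _).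
exact: l2_supp (supported_lincomb _ hw').
Qed.

End Linearity.

Section WeightedVectorNorm.
Variables (R : realType) (mu : R).
Local Open Scope complex_scope.

Lemma vnorm_ge0 n (x : 'cV[R[i]]_n) : 0 <= vnorm mu x.
Proof. exact: sqrtr_ge0. Qed.

Lemma vnorm_sqr n (x : 'cV[R[i]]_n) : vnorm mu x ^+ 2 = \sum_(k < n) cabs2 (x k 0) * wgt mu k.
Proof.
by rewrite /vnorm sqr_sqrtr // sumr_ge0 // => k _; rewrite mulr_ge0 ?cabs2_ge0 ?ltW ?wgt_gt0.
Qed.

Lemma vnorm_eq0 n (x : 'cV[R[i]]_n) : vnorm mu x = 0 -> x = 0.
Proof.
move=> x0; have : vnorm mu x ^+ 2 = 0 by rewrite x0 expr0n.
rewrite vnorm_sqr => /eqP; rewrite psumr_eq0 => [/allP hx|k _]; last first.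
  by rewrite mulr_ge0 ?cabs2_ge0 ?ltW ?wgt_gt0.
apply/matrixP => k j; rewrite ord1 mxE.
have /= := hx k (mem_index_enum _); rewrite mulf_eq0 (gt_eqF (wgt_gt0 _ _)) orbF.
by move/eqP/cabs2_eq0.
Qed.

Lemma unitmx_of_ker0 n (M : 'M[R[i]]_n) :
  (forall x : 'cV_n, M *m x = 0 -> x = 0) -> M \in unitmx.
Proof.
move=> M_inj; rewrite -unitmx_tr -row_free_unit -kermx_eq0.
apply/eqP/row_matrixP => i; rewrite row0; set r := row i (kermx M^T).
have rM : r *m M^T = 0 by apply/sub_kermxP; exact: row_sub.
have Mr : M *m r^T = 0 by rewrite -(trmxK M) -trmx_mul rM trmx0.
by rewrite -(trmxK r) (M_inj _ Mr) trmx0.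
Qed.

Lemma vnorm_invmx_le n (M : 'M[R[i]]_n) C :
  (forall x, vnorm mu x <= C * vnorm mu (M *m x)) ->
  M \in unitmx /\ forall y, vnorm mu (invmx M *m y) <= C * vnorm mu y.
Proof.
move=> M_lower; have M_unit : M \in unitmx.
  apply: unitmx_of_ker0 => x Mx0; apply: vnorm_eq0; apply/le_anti/andP; split.
    by apply: le_trans (M_lower x) _; rewrite Mx0 /vnorm big1 ?sqrtr0 ?mulr0 // => k _;
      rewrite mxE cabs2_0 mul0r.
  exact: vnorm_ge0.
by split => // y; apply: le_trans (M_lower _) _; rewrite mulKVmx.
Qed.

End WeightedVectorNorm.

Section Discretization.
Variables (R : realType) (N : nat) (B : (nat -> R[i]) -> 'cV[R[i]]_N) (a : nat -> R -> R[i]).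
Variables (D mu : R).
Hypothesis N_gt0 : (0 < N)%N.
Hypothesis B_linear : forall u v (c : R[i]), in_l2 D u -> in_l2 D v ->
  B (fun k => u k + c * v k) = B u + c *: B v.
Local Open Scope complex_scope.

Lemma BLop_lincomb M n (c : 'I_n -> R[i]) (w : 'I_n -> nat -> R[i]) i :
  (forall j, supported M (w j)) ->
  BLop B a (lincomb c w) i = \sum_j c j * BLop B a (w j) i.
Proof.
move=> hw; rewrite /BLop; case: (insub i) => [i'|]; last by rewrite (Lop_lincomb _ _ c hw).
by rewrite (B_lincomb c B_linear hw) summxE; apply: eq_bigr => j _; rewrite mxE.
Qed.

Definition Rx_seq n (x : 'cV[R[i]]_n) : nat -> R[i] :=
  lincomb (fun j => (rdiag R N j)%:C * x j 0) (fun j => eseq R j).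

Lemma supported_eseq n (j : 'I_n) : supported n (eseq R j).
Proof. by move=> k nk; rewrite /eseq gtn_eqF // (leq_trans _ nk). Qed.

Lemma supported_Rx_seq n (x : 'cV[R[i]]_n) : supported n (Rx_seq x).
Proof. exact: supported_lincomb (@supported_eseq n). Qed.

Lemma Rx_seqE n (x : 'cV[R[i]]_n) (k : 'I_n) : Rx_seq x k = (rdiag R N k)%:C * x k 0.
Proof.
rewrite /Rx_seq /lincomb (bigD1 k) //= /eseq eqxx mulr1 big1 ?addr0 // => j jk.
by rewrite (_ : (k == j :> nat) = false) ?mulr0 //; apply/negbTE; rewrite eq_sym.
Qed.

Lemma ARmxE n (x : 'cV[R[i]]_n) (i : 'I_n) :
  (Amat B a n *m Rmat R N n *m x) i 0 = BLop B a (Rx_seq x) i.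
Proof.
rewrite /Rx_seq (BLop_lincomb _ i (@supported_eseq n)) mxE.
apply: eq_bigr => j _; rewrite mxE (bigD1 j) //= big1 ?addr0; last first.
  by move=> k kj; rewrite /Rmat !mxE (negbTE kj) mulr0.
by rewrite /Amat /Rmat !mxE eqxx; ring.
Qed.

Definition rscale : R := (2 ^+ N.-1 * (N.-1)`!%:R)^-1.

Lemma rscale_gt0 : 0 < rscale.
Proof. by rewrite invr_gt0 mulr_gt0 ?exprn_gt0 ?ltr0n ?fact_gt0. Qed.

Lemma rdiag_bounds k : rscale <= rdiag R N k * k.+1%:R <= 2 * N%:R * rscale.
Proof.
pose t : R := (if (k < N)%N then 1 else k%:R^-1) * k.+1%:R.
have -> : rdiag R N k * k.+1%:R = rscale * t by rewrite /rdiag -/rscale /t mulrA.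
suff [t1 t2] : 1 <= t /\ t <= 2 * N%:R.
  have r0 := ltW rscale_gt0; apply/andP; split; first by rewrite -{1}(mulr1 rscale) ler_wpM2l.
  by rewrite [X in _ <= X]mulrC ler_wpM2l.
rewrite /t; case: ltnP => kN.
  by rewrite mul1r ler1n -natrM ler_nat; split => //; lia.
have k0 : (0 : R) < k%:R by rewrite ltr0n (leq_trans N_gt0 kN).
rewrite mulrC -/(_ / _) ler_pdivlMr // mul1r ler_pdivrMr // -!natrM !ler_nat.
by split; nia.
Qed.

Lemma wsum_Rx_seq_bounds n (x : 'cV[R[i]]_n) :
  rscale ^+ 2 * vnorm mu x ^+ 2 <= wsum (mu + 1) (Rx_seq x) n <=
  (2 * N%:R * rscale) ^+ 2 * vnorm mu x ^+ 2.
Proof.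
have -> : wsum (mu + 1) (Rx_seq x) n =
    \sum_(k < n) (rdiag R N k * k.+1%:R) ^+ 2 * (cabs2 (x k 0) * wgt mu k).
  by rewrite wsumE; apply: eq_bigr => k _; rewrite /wterm Rx_seqE cabs2M cabs2C wgtS; ring.
have r0 := ltW rscale_gt0.
rewrite vnorm_sqr !mulr_sumr; apply/andP; split; apply: ler_sum => k _;
  have /andP[lo hi] := rdiag_bounds k;
  (apply: ler_wpM2r; first by rewrite mulr_ge0 ?cabs2_ge0 ?ltW ?wgt_gt0).
  exact: ler_sqr_ge0 lo.
exact: ler_sqr_ge0 (le_trans r0 lo) hi.
Qed.

Lemma vnorm_ARmx n (x : 'cV[R[i]]_n) :
  vnorm mu (Amat B a n *m Rmat R N n *m x) ^+ 2 = wsum mu (BLop B a (Rx_seq x)) n.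
Proof. by rewrite vnorm_sqr wsumE; apply: eq_bigr => k _; rewrite ARmxE. Qed.

Definition tail_factor n : R := powR N.+1%:R (2 * `|mu|) / (n - N).+1%:R ^+ 2.

(* Beyond index [n], [D_N] kills [P_n^T R_n x], so the entries of (B;L) are those of the
   lower order part at index [i - N >= n - N]; trading one order of the weight there is
   what produces the factor [(n - N + 1)^-2]. *)
Lemma wterm_BLop_Rx_seq_tail n (x : 'cV[R[i]]_n) i : (N <= n)%N -> (n <= i)%N ->
  wterm mu (BLop B a (Rx_seq x)) i <=
  tail_factor n * wterm (mu + 1) (Llow N a (Rx_seq x)) (i - N).
Proof.
move=> Nn ni; have Ni : (N <= i)%N := leq_trans Nn ni; rewrite /wterm.
have -> : BLop B a (Rx_seq x) i = Llow N a (Rx_seq x) (i - N).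
  rewrite /BLop insubF; last by rewrite ltnNge Ni.
  by rewrite LopE /Dop subnK // (supported_Rx_seq x) // mulr0 add0r.
have hw : wgt mu i <= powR N.+1%:R (2 * `|mu|) * wgt mu (i - N).
  by apply: wgt_le_near; lia.
rewrite wgtS; apply: le_trans (ler_wpM2l (cabs2_ge0 _) hw) _.
set L := cabs2 _; set w := wgt mu (i - N); set P := powR _ _.
pose e : R := (i - N).+1%:R; pose d : R := (n - N).+1%:R.
have d0 : 0 < d ^+ 2 by rewrite exprn_gt0 // ltr0n.
rewrite -/e; have -> : tail_factor n * (L * (e ^+ 2 * w)) = L * (P * w) * (e ^+ 2 / d ^+ 2).
  by rewrite /tail_factor -/P -/d; ring.
apply: ler_peMr; first by rewrite !mulr_ge0 ?powR_ge0 ?cabs2_ge0 ?ltW ?wgt_gt0.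
by rewrite ler_pdivlMr // mul1r ler_sqr_ge0 ?ler0n // ler_nat ltnS leq_sub2r.
Qed.

Variable K : R.
Hypothesis K_ge0 : 0 <= K.
Hypothesis Llow_le : forall u Q, l2bound (mu + 1) u Q -> l2bound (mu + 1) (Llow N a u) (K * Q).

Lemma l2bound_BLop_Rx_seq n (x : 'cV[R[i]]_n) : (N <= n)%N ->
  l2bound mu (BLop B a (Rx_seq x)) (wsum mu (BLop B a (Rx_seq x)) n +
    tail_factor n * (K * wsum (mu + 1) (Rx_seq x) n)).
Proof.
move=> Nn M; set u := Rx_seq x; set Q := wsum (mu + 1) u n.
have hL := Llow_le (l2bound_supported (mu + 1) (supported_Rx_seq x)).
have rho0 : 0 <= tail_factor n by rewrite divr_ge0 ?powR_ge0 ?sqr_ge0.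
have Q0 : 0 <= Q by exact: wsum_ge0.
have [Mn|nM] := leqP M n.
  by apply: le_trans (wsum_nondecreasing _ _ Mn) _; rewrite lerDl !mulr_ge0.
rewrite {1}/wsum /series /= (@big_cat_nat _ _ _ n 0 M _ _ (leq0n n) (ltnW nM)) /= lerD2l.
apply: le_trans (_ : _ <= \sum_(n <= i < M) tail_factor n * wterm (mu + 1) (Llow N a u) (i - N)) _.
  by apply: ler_sum_nat => i /andP[ni _]; exact: wterm_BLop_Rx_seq_tail.
rewrite -mulr_sumr ler_wpM2l // -{1}(subnK Nn) big_addn.
under eq_bigr => i _ do rewrite addnK.
apply: le_trans (hL (M - N)%N); rewrite /wsum /series /=.
rewrite (@big_cat_nat _ _ _ (n - N) 0 (M - N)) //=; last by rewrite leq_sub2r // ltnW.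
by rewrite lerDr sumr_ge0 // => i _; exact: wterm_ge0.
Qed.

Lemma tail_factor_small T : 0 <= T ->
  exists n0, forall n, (n0 <= n)%N -> (N <= n)%N /\ T * tail_factor n <= 2^-1.
Proof.
move=> T0; pose P := powR N.+1%:R (2 * `|mu|).
have TP0 : 0 <= 2 * T * P by rewrite !mulr_ge0 ?powR_ge0.
exists (N + Num.Def.archi_bound (2 * T * P))%N => n n0n; split; first lia.
pose d : R := (n - N).+1%:R; have d1 : 1 <= d by rewrite ler1n.
have TPd : 2 * T * P <= d.
  apply: le_trans (ltW (archi_boundP TP0)) _; rewrite ler_nat; lia.
have d0 : 0 < d ^+ 2 by rewrite exprn_gt0 // (lt_le_trans ltr01 d1).
have dd : d <= d ^+ 2 by rewrite expr2 ler_peMl // (le_trans ler01 d1).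
rewrite /tail_factor -/P -/d mulrA ler_pdivrMr // -mulrA in TPd *.
move: TPd dd; set X := T * P; set Z := d ^+ 2; lra.
Qed.

Variable c : R.
Hypothesis c_gt0 : 0 < c.
Hypothesis BLop_l2 : forall u, in_l2 (mu + 1) u -> in_l2 mu (BLop B a u).
Hypothesis BLop_bounds : forall u, in_l2 (mu + 1) u ->
  l2norm mu (BLop B a u) <= c * l2norm (mu + 1) u /\
  l2norm (mu + 1) u <= c * l2norm mu (BLop B a u).

Lemma in_l2_Rx_seq n (x : 'cV[R[i]]_n) : in_l2 (mu + 1) (Rx_seq x).
Proof. exact: l2bound_in_l2 (l2bound_supported _ (supported_Rx_seq x)). Qed.

Lemma wsum_BLop_Rx_seq_le n (x : 'cV[R[i]]_n) :
  wsum mu (BLop B a (Rx_seq x)) n <= c ^+ 2 * wsum (mu + 1) (Rx_seq x) n.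
Proof.
have [BLu_le _] := BLop_bounds (@in_l2_Rx_seq n x).
apply: le_trans (l2bound_l2norm (BLop_l2 (@in_l2_Rx_seq n x)) n) _.
rewrite -(l2norm_supported (mu + 1) (supported_Rx_seq x)) -exprMn.
exact: ler_sqr_ge0 (l2norm_ge0 _ _) BLu_le.
Qed.

(* The tail of [(B;L)(P_n^T R_n x)] is absorbed by the lower bound of [(B;L)]. *)
Lemma wsum_Rx_seq_le n (x : 'cV[R[i]]_n) : (N <= n)%N ->
  c ^+ 2 * K * tail_factor n <= 2^-1 ->
  wsum (mu + 1) (Rx_seq x) n <= 2 * c ^+ 2 * wsum mu (BLop B a (Rx_seq x)) n.
Proof.
move=> Nn small; set S := wsum mu _ n; set Q := wsum (mu + 1) _ n.
have [_ u_le] := BLop_bounds (@in_l2_Rx_seq n x).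
have Q0 : 0 <= Q by exact: wsum_ge0.
have QS : Q <= c ^+ 2 * S + (c ^+ 2 * K * tail_factor n) * Q.
  have -> : c ^+ 2 * S + c ^+ 2 * K * tail_factor n * Q =
            c ^+ 2 * (S + tail_factor n * (K * Q)) by ring.
  apply: le_trans (_ : Q <= c ^+ 2 * l2norm mu (BLop B a (Rx_seq x)) ^+ 2) _.
    rewrite /Q -(l2norm_supported (mu + 1) (supported_Rx_seq x)) -exprMn.
    exact: ler_sqr_ge0 (l2norm_ge0 _ _) u_le.
  by apply: ler_wpM2l; [exact: sqr_ge0 | exact: l2norm_sqr_le (@l2bound_BLop_Rx_seq n x Nn)].
have ZQ := ler_wpM2r Q0 small; move: QS ZQ; rewrite -[2 * _ * S]mulrA.
set Z := c ^+ 2 * K * tail_factor n * Q; set cS := c ^+ 2 * S; lra.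
Qed.

Lemma vnorm_ARmx_le n (x : 'cV[R[i]]_n) :
  vnorm mu (Amat B a n *m Rmat R N n *m x) <= c * (2 * N%:R * rscale) * vnorm mu x.
Proof.
have r0 := ltW rscale_gt0; have c0 := ltW c_gt0.
rewrite -(ler_pXn2r (isT : (0 < 2)%N)) ?nnegrE ?mulr_ge0 ?vnorm_ge0 ?ler0n //.
rewrite vnorm_ARmx -mulrA exprMn; apply: le_trans (@wsum_BLop_Rx_seq_le n x) _.
by rewrite ler_wpM2l ?sqr_ge0 // exprMn; case/andP: (@wsum_Rx_seq_bounds n x).
Qed.

Lemma vnorm_le_ARmx n (x : 'cV[R[i]]_n) : (N <= n)%N ->
  c ^+ 2 * K * tail_factor n <= 2^-1 ->
  vnorm mu x <= 2 * c / rscale * vnorm mu (Amat B a n *m Rmat R N n *m x).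
Proof.
move=> Nn small; have r0 := rscale_gt0; have c0 := ltW c_gt0.
rewrite -(ler_pXn2r (isT : (0 < 2)%N)) ?nnegrE ?mulr_ge0 ?invr_ge0 ?vnorm_ge0 ?(ltW r0) //.
rewrite -(ler_pM2l (exprn_gt0 2 r0)) exprMn vnorm_ARmx.
have -> : rscale ^+ 2 * ((2 * c / rscale) ^+ 2 * wsum mu (BLop B a (Rx_seq x)) n) =
    2 * (2 * c ^+ 2 * wsum mu (BLop B a (Rx_seq x)) n) by field; rewrite gt_eqF.
case/andP: (@wsum_Rx_seq_bounds n x) => lo _; apply: le_trans lo _.
apply: le_trans (@wsum_Rx_seq_le n x Nn small) _.
by rewrite ler_peMl ?mulr_ge0 ?sqr_ge0 ?wsum_ge0 // ler1n.
Qed.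

Lemma ARmx_well_conditioned : exists (C : R) (n0 : nat), forall n, (n0 <= n)%N ->
  (forall x : 'cV[R[i]]_n,
     vnorm mu (Amat B a n *m Rmat R N n *m x) <= C * vnorm mu x) /\
  (Amat B a n *m Rmat R N n \in unitmx) /\
  (forall x : 'cV[R[i]]_n,
     vnorm mu (invmx (Amat B a n *m Rmat R N n) *m x) <= C * vnorm mu x).
Proof.
have [n0 n0P] := tail_factor_small (mulr_ge0 (sqr_ge0 c) K_ge0).
have [r0 c0] := (ltW rscale_gt0, ltW c_gt0).
have C1_ge0 : 0 <= c * (2 * N%:R * rscale) by rewrite !mulr_ge0.
have C2_ge0 : 0 <= 2 * c / rscale by rewrite !mulr_ge0 ?invr_ge0.
exists (c * (2 * N%:R * rscale) + 2 * c / rscale), n0 => n /n0P[Nn small].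
have [unit inv_le] : Amat B a n *m Rmat R N n \in unitmx /\ forall y : 'cV_n,
    vnorm mu (invmx (Amat B a n *m Rmat R N n) *m y) <= 2 * c / rscale * vnorm mu y.
  by apply: vnorm_invmx_le => x; apply: vnorm_le_ARmx; rewrite // mulrAC.
split; [|split] => // x.
  apply: le_trans (vnorm_ARmx_le x) _.
  by rewrite ler_wpM2r ?vnorm_ge0 // lerDl.
by apply: le_trans (inv_le x) _; rewrite ler_wpM2r ?vnorm_ge0 // lerDr.
Qed.

End Discretization.

Theorem lemma4p4 (R : realType) (N : nat) (a : nat -> R -> R[i])
    (B : (nat -> R[i]) -> 'cV[R[i]]_N) (D lam : int) :
  (1 <= N)%N ->
  (forall l : nat, (l < N)%N -> forall mu : R, exists c : R,
     forall v : nat -> R[i], in_l2 mu v ->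
       (forall j, csum_cvg (fun k => Mentry l (a l) j k * v k)) /\
       in_l2 mu (Mop l (a l) v) /\
       l2norm mu (Mop l (a l) v) <= c * l2norm mu v) ->
  (forall (u v : nat -> R[i]) (c : R[i]), in_l2 D%:~R u -> in_l2 D%:~R v ->
     B (fun k => u k + c * v k) = B u + c *: B v) ->
  (exists c : R, forall u, in_l2 D%:~R u -> cnorm (B u) <= c * l2norm D%:~R u) ->
  (D - 1 <= lam) ->
  (forall u, in_l2 (lam + 1)%:~R u -> in_l2 lam%:~R (BLop B a u)) ->
  (exists c : R, 0 < c /\ forall u, in_l2 (lam + 1)%:~R u ->
     l2norm lam%:~R (BLop B a u) <= c * l2norm (lam + 1)%:~R u /\
     l2norm (lam + 1)%:~R u <= c * l2norm lam%:~R (BLop B a u)) ->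
  (forall v, in_l2 lam%:~R v -> exists u, in_l2 (lam + 1)%:~R u /\ BLop B a u = v) ->
  exists (C : R) (n0 : nat), forall n : nat, (n0 <= n)%N ->
    (forall x : 'cV[R[i]]_n,
       vnorm lam%:~R (Amat B a n *m Rmat R N n *m x) <= C * vnorm lam%:~R x) /\
    (Amat B a n *m Rmat R N n \in unitmx) /\
    (forall x : 'cV[R[i]]_n,
       vnorm lam%:~R (invmx (Amat B a n *m Rmat R N n) *m x) <= C * vnorm lam%:~R x).
Proof.
(* A_n R_n only involves finitely supported sequences, on which linearity of B is all
   that is used; invertibility of (B;L) enters only through its two-sided norm bound. *)
move=> N_gt0 HM B_linear _ _.
have -> : ((lam + 1)%:~R : R) = lam%:~R + 1 by rewrite intrD.
move=> BLop_l2 [c [c_gt0 BLop_bounds]] _.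
have [K [K_ge0 Llow_le]] : bounded_op (lam%:~R + 1) (lam%:~R + 1) (Llow N a).
  apply: Llow_bounded => // l lN mu.
  by have [c' hc'] := HM l lN mu; exists c' => v /hc'[_].
exact: (ARmx_well_conditioned N_gt0 B_linear K_ge0 Llow_le c_gt0 BLop_l2 BLop_bounds).
Qed.
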